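(* Let $P$ be a set of $n$ points in general position in the plane such that the number $m$ of points of $P$ on the boundary of the convex hull of $P$ satisfies $m\in\{8,9\}$. Then $\mu(D(P))\geq\binom{n}{2}-8$.
   Context: General position means no three points collinear. $D(P)$ is the graph whose vertices are all closed segments with both endpoints in $P$, two adjacent iff disjoint. For a graph $G$ and $U\subseteq V(G)$, two distinct vertices $x,y\in U$ are $U$-mutually visible if $G$ contains a shortest $x$-$y$ path none of whose internal vertices lies in $U$; $U$ is a mutual-visibility set if every two distinct vertices of $U$ are $U$-mutually visible. $\mu(G)$ is the maximum size of a mutual-visibility set of $G$. *)

From HB Require Import structures.
From mathcomp Require Import all_boot all_order all_algebra.
From mathcomp Require Import all_classical all_reals topology normedtype.
Set Implicit Arguments. Unset Strict Implicit. Unset Printing Implicit Defensive.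
Import Order.TTheory GRing.Theory Num.Theory.
Import numFieldNormedType.Exports.
Local Open Scope ring_scope.
Local Open Scope classical_set_scope.

Section Graph.
Variables (T : finType) (adj : rel T).

(* x :: s is a walk from x to y; its length is size s *)
Definition is_walk (x : T) (s : seq T) (y : T) : bool :=
  path adj x s && (last x s == y).

Definition shortest_walk (x : T) (s : seq T) (y : T) : Prop :=
  is_walk x s y /\ forall s' : seq T, is_walk x s' y -> (size s <= size s')%N.

(* internal vertices of the walk x :: s (all but the two endpoints) *)
Definition internal (x : T) (s : seq T) : seq T := behead (belast x s).

Definition mutually_visible (U : {set T}) (x y : T) : Prop :=
  exists s : seq T, shortest_walk x s y /\ all (fun z => z \notin U) (internal x s).

Definition mv_set (U : {set T}) : Prop :=
  forall x y, x \in U -> y \in U -> x != y -> mutually_visible U x y.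

Definition mu : nat := \max_(U : {set T} | `[< mv_set U >]) #|U|.
End Graph.

Section Geometry.
Variable R : realType.
Definition pt := (R * R)%type.

Definition orient (a b c : pt) : R :=
  (b.1 - a.1) * (c.2 - a.2) - (b.2 - a.2) * (c.1 - a.1).

Definition collinear (a b c : pt) : Prop := orient a b c = 0.

Definition segment (a b : pt) : set pt :=
  [set q | exists2 t : R, 0 <= t <= 1 &
     q = ((1 - t) * a.1 + t * b.1, (1 - t) * a.2 + t * b.2)].

Variable n : nat.
Variable p : 'I_n -> pt.

Definition general_position : Prop :=
  forall i j k : 'I_n, i != j -> j != k -> i != k -> ~ collinear (p i) (p j) (p k).

Definition conv_hull : set pt :=
  [set q | exists w : 'I_n -> R, (forall i, 0 <= w i) /\ \sum_i w i = 1 /\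
     q = (\sum_i w i * (p i).1, \sum_i w i * (p i).2)].

Definition hull_boundary : set pt :=
  @closure (R * R)%type conv_hull `\` @interior (R * R)%type conv_hull.

Definition num_boundary_points : nat :=
  #|[set i : 'I_n | `[< hull_boundary (p i) >]]|.

(* vertices of D(P): closed segments with two (distinct) endpoints in P,
   represented by 2-element sets of indices *)
Definition seg_vertex := {S : {set 'I_n} | #|S| == 2%N}.

Definition seg_of (S : seg_vertex) : set pt :=
  [set q | exists i j : 'I_n, [/\ i \in val S, j \in val S, i != j &
                                   segment (p i) (p j) q]].

Definition D_adj : rel seg_vertex :=
  fun S T => `[< seg_of S `&` seg_of T = set0 >].
End Geometry.

From HB Require Import structures.
From mathcomp Require Import all_boot all_order all_algebra.
From mathcomp Require Import all_classical all_reals topology normedtype.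
From mathcomp Require Import ring lra zify.
Set Implicit Arguments. Unset Strict Implicit. Unset Printing Implicit Defensive.
Import Order.TTheory GRing.Theory Num.Theory.
Import numFieldNormedType.Exports.
Local Open Scope ring_scope.

(* Points of P on the boundary of conv P are extreme: none lies strictly
   inside a triangle of P.  Call ij a hull edge if all other points lie
   strictly to its left.  Following hull edges from an extreme point visits
   every extreme point, so there are hull vertices x0, ..., x7 in
   counterclockwise order with each x(2k) x(2k+1) a hull edge.  Let W consist
   of the four hull edges x0x1, x2x3, x4x5, x6x7 and the four segments joining
   {x0, x1} to {x4, x5}.  Two intersecting segments S, T outside W have a
   common neighbour in W: a hull edge avoiding the endpoints of S and T is
   disjoint from both; otherwise S and T together contain one endpoint of each
   of the four hull edges, and then either S or T joins {x0, x1} to {x4, x5},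
   or S and T do not cross.  Hence the C(n,2) - 8 segments outside W form a
   mutual-visibility set. *)

Section MutualVisibility.
Variables (T : finType) (adj : rel T).

Lemma mv_set_of_common_neighbours (U : {set T}) :
  (forall x y, x \in U -> y \in U -> x != y -> ~~ adj x y ->
     exists2 w, w \notin U & adj x w && adj w y) ->
  mv_set adj U.
Proof.
move=> common x y xU yU xy; case: (boolP (adj x y)) => [xy_adj | xy_nadj].
  exists [:: y]; split=> //; split; first by rewrite /is_walk /= xy_adj eqxx.
  by case=> [|z s] //; rewrite /is_walk /= => /eqP yx; rewrite yx eqxx in xy.
have [w wU /andP[xw wy]] := common x y xU yU xy xy_nadj.
exists [:: w; y]; split; last by rewrite /internal /= wU.
split; first by rewrite /is_walk /= xw wy eqxx.
case=> [|z [|z' s]] //; rewrite /is_walk /=.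
  by move=> /eqP yx; rewrite yx eqxx in xy.
by rewrite andbT => /andP[xz /eqP zy]; rewrite -zy xz in xy_nadj.
Qed.

Lemma mv_set_card_le_mu (U : {set T}) : mv_set adj U -> (#|U| <= mu adj)%N.
Proof. by move=> mvU; apply: leq_bigmax_cond; apply/asboolP. Qed.

End MutualVisibility.

Lemma sum_delta (R : pzSemiRingType) (T : finType) (i : T) (F : T -> R) :
  \sum_k (k == i)%:R * F k = F i.
Proof.
rewrite (bigD1 i) //= eqxx mul1r big1 ?addr0 // => k /negbTE ->.
by rewrite mul0r.
Qed.

Section Orientation.
Variable R : realType.
Implicit Types a b c d q : pt R.

Lemma orient_rot a b c : orient a b c = orient b c a.
Proof. by rewrite /orient; ring. Qed.

Lemma orient_swap a b c : orient a c b = - orient a b c.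
Proof. by rewrite /orient; ring. Qed.

Lemma orient_aab a b : orient a a b = 0.
Proof. by rewrite /orient; ring. Qed.

Lemma orient_aba a b : orient a b a = 0.
Proof. by rewrite /orient; ring. Qed.

Lemma orient_abb a b : orient a b b = 0.
Proof. by rewrite /orient; ring. Qed.

Lemma orient_cramer a b c q f g :
  orient b c q * orient f g a + orient c a q * orient f g b + orient a b q * orient f g c
  = orient a b c * orient f g q.
Proof. by rewrite /orient; ring. Qed.

Lemma orient_segment a b c d t :
  orient a b ((1 - t) * c.1 + t * d.1, (1 - t) * c.2 + t * d.2)
  = (1 - t) * orient a b c + t * orient a b d.
Proof. by rewrite /orient /=; ring. Qed.

Lemma segment_sym a b q : segment a b q -> segment b a q.
Proof.
move=> [t /andP[t0 t1] ->]; exists (1 - t); first by apply/andP; split; lra.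
by congr (_, _); ring.
Qed.

Lemma segments_disjoint_of_same_side a b c d q :
  0 < orient a b c -> 0 < orient a b d -> segment a b q -> segment c d q -> False.
Proof.
move=> ac ad [t _ ->] [s /andP[s0 s1] e].
have : 0 < (1 - s) * orient a b c + s * orient a b d by nra.
by rewrite -orient_segment -e orient_segment orient_aba orient_abb !mulr0 addr0 ltxx.
Qed.

Lemma continuous_orient a b : continuous (orient a b).
Proof.
move=> q; apply: cvgB; apply: cvgM; try exact: cvg_cst.
- by apply: cvgB; [exact: cvg_snd | exact: cvg_cst].
- by apply: cvgB; [exact: cvg_fst | exact: cvg_cst].
Qed.

Lemma open_orient_gt0 a b : open [set q | 0 < orient a b q]%classic.
Proof.
apply: (@open_comp _ _ (orient a b) [set x | x > 0]%classic); last exact: open_gt.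
by move=> q _; exact: continuous_orient.
Qed.

End Orientation.

Section ExtremePoints.
Variables (R : realType) (n : nat) (p : 'I_n -> pt R).
Local Notation o i j k := (orient (p i) (p j) (p k)).

Lemma triangle_interior_in_hull ia ib ic q :
  0 < orient (p ia) (p ib) q -> 0 < orient (p ib) (p ic) q ->
  0 < orient (p ic) (p ia) q -> conv_hull p q.
Proof.
set a := p ia; set b := p ib; set c := p ic.
set C := orient a b q; set A := orient b c q; set B := orient c a q => C_gt0 A_gt0 B_gt0.
have S_gt0 : 0 < A + B + C by apply: addr_gt0 => //; apply: addr_gt0.
have S_neq0 : A + B + C != 0 by rewrite gt_eqF.
(* [w] puts the barycentric coordinates of [q] on [ia], [ib] and [ic]. *)
pose w k := (A * (k == ia)%:R + B * (k == ib)%:R + C * (k == ic)%:R) / (A + B + C).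
have sum_w X : \sum_k w k * X k = (A * X ia + B * X ib + C * X ic) / (A + B + C).
  rewrite (eq_bigr (fun k => (k == ia)%:R * (A * X k / (A + B + C))
    + (k == ib)%:R * (B * X k / (A + B + C)) + (k == ic)%:R * (C * X k / (A + B + C)))).
    by rewrite !big_split /= !sum_delta; ring.
  by move=> k _; rewrite /w; ring.
exists w; split.
  move=> k; apply: divr_ge0; last exact: ltW.
  by (do 2?apply: addr_ge0); apply: mulr_ge0 (ltW _) (ler0n _ _).
split.
  have := sum_w (fun=> 1); rewrite !mulr1 divff // => <-.
  by apply: eq_bigr => k _; rewrite mulr1.
have e1 : A * a.1 + B * b.1 + C * c.1 = (A + B + C) * q.1 by rewrite /A /B /C /orient; ring.
have e2 : A * a.2 + B * b.2 + C * c.2 = (A + B + C) * q.2 by rewrite /A /B /C /orient; ring.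
by rewrite !sum_w e1 e2 !(mulrC (A + B + C)) !mulfK //; case: (q).
Qed.

Definition in_triangle (u a b c : 'I_n) := [&& 0 < o a b u, 0 < o b c u & 0 < o c a u].

Definition extreme (u : 'I_n) := [forall a, forall b, forall c, ~~ in_triangle u a b c].

Lemma hull_boundary_extreme i : hull_boundary p (p i) -> extreme i.
Proof.
move=> [_ not_interior]; apply/forallP => a; apply/forallP => b; apply/forallP => c.
apply/negP => /and3P[ab bc ca]; apply: not_interior.
pose O := ([set q | 0 < orient (p a) (p b) q] `&` [set q | 0 < orient (p b) (p c) q]
   `&` [set q | 0 < orient (p c) (p a) q])%classic.
have O_open : open O by do 2?apply: openI; exact: open_orient_gt0.
have : nbhs (p i) O by apply: open_nbhs_nbhs; split.
by apply: filterS => q [[qab qbc] qca]; exact: triangle_interior_in_hull qab qbc qca.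
Qed.

Lemma boundary_points_le_extreme : (num_boundary_points p <= #|[set i | extreme i]|)%N.
Proof.
apply: subset_leq_card; apply/fintype.subsetP => i; rewrite !inE => /asboolP.
exact: hull_boundary_extreme.
Qed.

Lemma orient_gt0_neq i j k : 0 < o i j k -> [/\ i != j, j != k & i != k].
Proof.
move=> h; split; apply/eqP => e; move: h.
all: by rewrite e ?orient_aab ?orient_abb ?orient_aba ltxx.
Qed.

Definition hull_edge (i j : 'I_n) :=
  (i != j) && [forall k, (k != i) && (k != j) ==> (0 < o i j k)].

Lemma hull_edge_neq i j : hull_edge i j -> i != j.
Proof. by case/andP. Qed.

Lemma hull_edge_left i j k : hull_edge i j -> k != i -> k != j -> 0 < o i j k.
Proof. by case/andP=> _ /forallP /(_ k) /implyP h ki kj; apply: h; rewrite ki. Qed.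

(* By Cramer's rule, [o i j j = 0] would be a positive combination of the
   values of [o i j] at the vertices of a triangle around [j]. *)
Lemma hull_edge_extreme i j : hull_edge i j -> extreme j.
Proof.
move=> ij; apply/forallP => a; apply/forallP => b; apply/forallP => c.
apply/negP => /and3P[abj bcj caj].
have [ab bj aj] := orient_gt0_neq abj; have [_ cj _] := orient_gt0_neq bcj.
have left_ge0 k : k != j -> 0 <= o i j k.
  by move=> kj; case: (eqVneq k i) => [->|ki]; rewrite ?orient_aba // ltW ?hull_edge_left.
have sum_gt0 : 0 < o b c j * o i j a + o c a j * o i j b + o a b j * o i j c.
  have := mulr_ge0 (ltW bcj) (left_ge0 a aj).
  have := mulr_ge0 (ltW caj) (left_ge0 b bj).
  have := mulr_ge0 (ltW abj) (left_ge0 c cj).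
  case: (eqVneq a i) => [ai|ai].
  - have bi : b != i by rewrite -ai eq_sym.
    have : 0 < o c a j * o i j b by apply: mulr_gt0 => //; apply: hull_edge_left.
    lra.
  - have : 0 < o b c j * o i j a by apply: mulr_gt0 => //; apply: hull_edge_left.
    lra.
by move: sum_gt0; rewrite orient_cramer orient_abb mulr0 ltxx.
Qed.

Lemma hull_edge_uniq i i' j : hull_edge i j -> hull_edge i' j -> i = i'.
Proof.
move=> ij i'j; apply/eqP/negPn/negP => ii'; have i'i : i' != i by rewrite eq_sym.
have := hull_edge_left i'j ii' (hull_edge_neq ij).
rewrite orient_rot orient_rot orient_swap oppr_gt0 ltNge.
by rewrite (ltW (hull_edge_left ij i'i (hull_edge_neq i'j))).
Qed.

Hypothesis gp : general_position p.

Lemma orient_gt0_swap i j k : i != j -> j != k -> i != k -> ~~ (0 < o i j k) -> 0 < o i k j.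
Proof.
move=> ij jk ik; rewrite -leNgt => le0.
by rewrite orient_swap oppr_gt0 lt_neqAle le0 andbT; apply/eqP; exact: gp.
Qed.

(* Otherwise [u] would lie inside the triangle [v w x]. *)
Lemma extreme_orient_trans u v w x : extreme u -> u != v -> u != x -> v != x ->
  0 < o u v w -> 0 < o u w x -> 0 < o u v x.
Proof.
move=> ext_u uv ux vx uvw uwx; apply/negPn/negP => /(orient_gt0_swap uv vx ux) uxv.
move/forallP: ext_u => /(_ v) /forallP /(_ w) /forallP /(_ x) /negP; apply.
by rewrite /in_triangle -!(orient_rot (p u)) uvw uwx uxv.
Qed.

(* Take [j] maximising the number of points to the left of [i j]. *)
Lemma extreme_hull_edge i j0 : extreme i -> j0 != i -> exists j, hull_edge i j.
Proof.
move=> ext_i j0i; pose left_of j := [set k | 0 < o i j k].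
have [j ji jmax] := @arg_maxnP _ j0 (fun j => j != i) (fun j => #|left_of j|) j0i.
exists j; rewrite /hull_edge eq_sym ji; apply/forallP => k; apply/implyP => /andP[ki kj].
apply/negPn/negP => ijk_le0.
have ikj : 0 < o i k j by apply: orient_gt0_swap; rewrite // eq_sym.
have : left_of j \proper left_of k.
  rewrite properE; apply/andP; split.
    apply/fintype.subsetP => l; rewrite !inE => ijl.
    have [_ _ il] := orient_gt0_neq ijl.
    have kl : k != l by apply: contraNneq ijk_le0 => ->.
    by apply: (extreme_orient_trans ext_i _ il kl ikj ijl); rewrite eq_sym.
  by apply/fintype.subsetPn; exists j; rewrite !inE ?orient_abb ?ltxx.
by move/proper_card; rewrite ltnNge => /negP; apply; exact: jmax.
Qed.

Hypothesis n_gt1 : (1 < n)%N.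

Lemma exists_neq (i : 'I_n) : exists j : 'I_n, j != i.
Proof.
pose o0 : 'I_n := Ordinal (ltnW n_gt1); pose o1 : 'I_n := Ordinal n_gt1.
by case: (eqVneq o0 i) => [<-|]; [exists o1 | exists o0].
Qed.

Definition hull_succ i := odflt i [pick j | hull_edge i j].

Lemma hull_edge_succ i : extreme i -> hull_edge i (hull_succ i).
Proof.
move=> ext_i; rewrite /hull_succ; case: pickP => [//|none].
have [j0 j0i] := exists_neq i; have [j ij] := extreme_hull_edge ext_i j0i.
by rewrite none in ij.
Qed.

Lemma extreme_succ i : extreme i -> extreme (hull_succ i).
Proof. by move/hull_edge_succ/hull_edge_extreme. Qed.

Lemma hull_succ_inj : {in [pred i | extreme i] &, injective hull_succ}.
Proof.
move=> i i' ext_i ext_i' e; apply: hull_edge_uniq (hull_edge_succ ext_i) _.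
by rewrite e; exact: hull_edge_succ.
Qed.

Section HullWalk.
Variable x0 : 'I_n.
Hypothesis x0_extreme : extreme x0.
Local Notation x k := (iter k hull_succ x0).
Local Notation L := (order hull_succ x0).

Lemma extreme_iter k : extreme (x k).
Proof. by elim: k => //= k; exact: extreme_succ. Qed.

Lemma hull_edge_iter k : hull_edge (x k) (x k.+1).
Proof. exact: hull_edge_succ (extreme_iter k). Qed.

Lemma iter_succ_order : x L = x0.
Proof.
apply: (@iter_order_in _ _ [pred i | extreme i]) => //; last exact: hull_succ_inj.
by move=> i; exact: extreme_succ.
Qed.

Lemma iter_neq a b : (a < L)%N -> (b < L)%N -> a != b -> x a != x b.
Proof. by move=> aL bL; apply: contraNneq => e; rewrite -(findex_iter aL) -(findex_iter bL) e. Qed.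

Lemma iter_lt_neq a b : (a < b < L)%N -> x a != x b.
Proof. by case/andP=> ab bL; apply: iter_neq; rewrite ?(ltn_trans ab) ?ltn_eqF. Qed.

Lemma order_gt1 : (1 < L)%N.
Proof.
rewrite ltn_neqAle order_gt0 andbT; apply/eqP => L1.
have := iter_succ_order; rewrite -L1 /= => e.
by have := hull_edge_neq (hull_edge_iter 0); rewrite /= e eqxx.
Qed.

(* Otherwise [y] is left of every hull edge [x k, x k.+1]; as [y] is extreme,
   all [x k] are then left of the ray [y x0], contradicting the last edge. *)
Lemma extreme_in_orbit y : extreme y -> fconnect hull_succ x0 y.
Proof.
move=> ext_y; apply/negPn/negP => y_out.
have y_neq k : y != x k by apply: contraNneq y_out => ->; exact: fconnect_iter.
have y_left k : 0 < o y (x k) (x k.+1).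
  by rewrite orient_rot; apply: hull_edge_left (hull_edge_iter k) (y_neq k) (y_neq k.+1).
have fan k : (0 < k < L)%N -> 0 < o y x0 (x k).
  elim: k => // k ih /andP[_ kL]; case: (posnP k) => [-> | k_gt0]; first exact: y_left 0.
  apply: (extreme_orient_trans ext_y (y_neq 0) (y_neq k.+1) _ (ih _) (y_left k)).
    by apply: iter_neq; rewrite ?order_gt0.
  by rewrite k_gt0 ltnW.
have fan_last : 0 < o y x0 (x L.-1).
  by apply: fan; rewrite ltn_predRL order_gt1 ltn_predL order_gt0.
have := y_left L.-1; rewrite prednK ?order_gt0 // iter_succ_order.
by rewrite orient_swap oppr_gt0 ltNge ltW.
Qed.

Lemma card_extreme_le_order : (#|[set y | extreme y]| <= L)%N.
Proof.
by apply: subset_leq_card; apply/fintype.subsetP => y; rewrite inE; exact: extreme_in_orbit.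
Qed.

Lemma orient_iter_succ_gt0 i k : (i < k)%N -> (k.+1 < L)%N -> 0 < o (x i) (x k) (x k.+1).
Proof.
move=> ik kL; rewrite orient_rot; apply: hull_edge_left (hull_edge_iter k) _ _.
  by apply: iter_lt_neq; rewrite ik ltnW.
by apply: iter_lt_neq; rewrite kL (ltn_trans ik).
Qed.

Lemma orient_iter_gt0 i j k : (i < j < k)%N -> (k < L)%N -> 0 < o (x i) (x j) (x k).
Proof.
case/andP=> ij; elim: k => // k ih; rewrite ltnS leq_eqVlt => /orP[/eqP <- | jk] kL.
  exact: orient_iter_succ_gt0.
have ik := ltn_trans ij jk.
apply: (extreme_orient_trans (extreme_iter i) _ _ _ (ih jk (ltnW kL))
                               (orient_iter_succ_gt0 ik kL)).
all: by apply: iter_lt_neq; lia.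
Qed.

End HullWalk.
End ExtremePoints.

Lemma card_seg_vertex n : #|{: seg_vertex n}| = 'C(n, 2).
Proof.
rewrite card_sig -[n in 'C(n, 2)]card_ord -card_draws.
by apply: eq_card => A; rewrite !inE.
Qed.

Lemma set2_of_card2 (T : finType) (A : {set T}) a b :
  #|A| = 2 -> a \in A -> b \in A -> a != b -> A = [set a; b].
Proof.
move=> A2 aA bA ab; apply/eqP; rewrite eq_sym eqEcard cards2 ab A2 leqnn andbT.
by apply/fintype.subsetP => z; rewrite !inE => /orP[]/eqP->.
Qed.

Lemma card2_no_third (T : finType) (A : {set T}) a b c :
  #|A| = 2 -> a \in A -> b \in A -> c \in A -> a != b -> a != c -> b != c -> False.
Proof.
move=> A2 aA bA + ab ac bc; rewrite (set2_of_card2 A2 aA bA ab) !inE.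
by rewrite eq_sym (negbTE ac) eq_sym (negbTE bc).
Qed.

Section Disjointness.
Variables (R : realType) (n : nat) (p : 'I_n -> pt R).

Lemma card_val_seg_vertex (S : seg_vertex n) : #|val S| = 2.
Proof. exact/eqP/(valP S). Qed.

Lemma D_adj_sym (S T : seg_vertex n) : D_adj p S T -> D_adj p T S.
Proof. by rewrite /D_adj setIC. Qed.

Lemma D_adj_of_left (S T : seg_vertex n) u v : val S = [set u; v] ->
  (forall k, k \in val T -> 0 < orient (p u) (p v) (p k)) -> D_adj p S T.
Proof.
move=> S_uv T_left; apply/asboolP/seteqP; split=> // q.
move=> [[i [j [iS jS ij ij_q]]] [k [l [kT lT _ kl_q]]]].
have [uvk uvl] := (T_left k kT, T_left l lT).
move: iS jS ij ij_q; rewrite S_uv !inE => /orP[]/eqP-> /orP[]/eqP->; rewrite ?eqxx // => _.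
  by move=> uv_q; exact: segments_disjoint_of_same_side uvk uvl uv_q kl_q.
by move=> /segment_sym uv_q; exact: segments_disjoint_of_same_side uvk uvl uv_q kl_q.
Qed.

Lemma D_adj_hull_edge (E T : seg_vertex n) u v : hull_edge p u v -> val E = [set u; v] ->
  u \notin val T -> v \notin val T -> D_adj p E T.
Proof.
move=> uv E_uv uT vT; apply: D_adj_of_left E_uv _ => k kT.
by apply: hull_edge_left uv _ _; [apply: contraNneq uT => <- | apply: contraNneq vT => <-].
Qed.

End Disjointness.

Section EightHullVertices.
Variables (R : realType) (n : nat) (p : 'I_n -> pt R) (x : nat -> 'I_n).
Hypothesis x_neq : forall a b, (a < 8)%N -> (b < 8)%N -> a != b -> x a != x b.
Hypothesis x_hull_edge : forall k, (k < 4)%N -> hull_edge p (x (2 * k)) (x (2 * k).+1).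
Hypothesis x_ccw : forall i j k, (i < j < k)%N -> (k < 8)%N ->
  0 < orient (p (x i)) (p (x j)) (p (x k)).

Definition excluded_segments : seq {set 'I_n} :=
  [:: [set x 0; x 1]; [set x 2; x 3]; [set x 4; x 5]; [set x 6; x 7];
      [set x 0; x 4]; [set x 0; x 5]; [set x 1; x 4]; [set x 1; x 5]].

Definition excluded_link (S T : seg_vertex n) :=
  exists2 w : seg_vertex n, val w \in excluded_segments & D_adj p S w && D_adj p w T.

Lemma x_lt_neq a b : (a < b < 8)%N -> x a != x b.
Proof. by case/andP=> ab b8; apply: x_neq; rewrite ?(ltn_trans ab) ?ltn_eqF. Qed.

Lemma hull_edge_excluded k : (k < 4)%N -> [set x (2 * k); x (2 * k).+1] \in excluded_segments.
Proof. by case: k => [|[|[|[|k]]]] //= _; rewrite !inE eqxx ?orbT. Qed.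

Lemma cross_excluded a0 a2 : (a0 < 2)%N -> (4 <= a2 < 6)%N ->
  [set x a0; x a2] \in excluded_segments.
Proof.
by case: a0 => [|[|]] // _; case: a2 => [|[|[|[|[|[|]]]]]] // _; rewrite !inE eqxx ?orbT.
Qed.

Lemma excluded_link_or_hull_edge_met (S T : seg_vertex n) k : (k < 4)%N ->
  excluded_link S T \/ exists2 a, (2 * k <= a < (2 * k).+2)%N & x a \in val S :|: val T.
Proof.
move=> k4.
case: (boolP (x (2 * k) \in val S :|: val T)) => [met | avoid0].
  by right; exists (2 * k)%N => //; lia.
case: (boolP (x (2 * k).+1 \in val S :|: val T)) => [met | avoid1].
  by right; exists (2 * k).+1 => //; lia.
left; have edge := x_hull_edge k4.
have card_edge : #|[set x (2 * k); x (2 * k).+1]| == 2 by rewrite cards2 (hull_edge_neq edge).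
pose E : seg_vertex n := exist (fun A : {set 'I_n} => #|A| == 2) _ card_edge.
have E_adj (U : seg_vertex n) : val U \subset val S :|: val T -> D_adj p E U.
  move=> /fintype.subsetP sub.
  by apply: (D_adj_hull_edge edge) => //; apply: contra (sub _) _.
exists E; first exact: hull_edge_excluded.
by rewrite (D_adj_sym (E_adj S (finset.subsetUl _ _))) (E_adj T (finset.subsetUr _ _)).
Qed.

Lemma noncrossing_D_adj (S T : seg_vertex n) a0 a1 a2 a3 :
  (a0 < a1 < a2)%N -> (a2 < a3 < 8)%N ->
  x a0 \in val S -> x a2 \in val T -> x a1 \in val S :|: val T -> x a3 \in val S :|: val T ->
  D_adj p S T.
Proof.
move=> a012 a238 S0 T2 S1T1 S3T3.
have [n01 n03 n12 n13 n23] :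
    [/\ x a0 != x a1, x a0 != x a3, x a1 != x a2, x a1 != x a3 & x a2 != x a3].
  by split; apply: x_lt_neq; lia.
case: (boolP (x a1 \in val S)) => [S1 | S1].
- have T3 : x a3 \in val T.
    case/setUP: S3T3 => // S3.
    by case: (card2_no_third (card_val_seg_vertex S) S0 S1 S3 n01 n03 n13).
  apply: D_adj_of_left (set2_of_card2 (card_val_seg_vertex S) S0 S1 n01) _ => m.
  rewrite (set2_of_card2 (card_val_seg_vertex T) T2 T3 n23) !inE.
  by move=> /orP[]/eqP->; apply: x_ccw; clear -a012 a238; lia.
- have T1 : x a1 \in val T by case/setUP: S1T1 => // S1'; rewrite S1' in S1.
  have S3 : x a3 \in val S.
    case/setUP: S3T3 => // T3.
    by case: (card2_no_third (card_val_seg_vertex T) T1 T2 T3 n12 n13 n23).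
  apply: D_adj_sym; apply: D_adj_of_left (set2_of_card2 (card_val_seg_vertex T) T1 T2 n12) _ => m.
  rewrite (set2_of_card2 (card_val_seg_vertex S) S0 S3 n03) !inE => /orP[]/eqP->.
    by rewrite -orient_rot; apply: x_ccw; clear -a012 a238; lia.
  by apply: x_ccw; clear -a012 a238; lia.
Qed.

(* Each of the four hull edges [x (2k), x (2k+1)] either links [S] and [T] or
   meets [S :|: T]; in the latter case [S :|: T] picks one endpoint from each. *)
Lemma excluded_common_neighbour (S T : seg_vertex n) :
  val S \notin excluded_segments -> val T \notin excluded_segments -> ~~ D_adj p S T ->
  excluded_link S T.
Proof.
move=> S_out T_out ST.
case: (excluded_link_or_hull_edge_met S T (k := 0) isT) => [//|[a0 ha0 m0]].
case: (excluded_link_or_hull_edge_met S T (k := 1) isT) => [//|[a1 ha1 m1]].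
case: (excluded_link_or_hull_edge_met S T (k := 2) isT) => [//|[a2 ha2 m2]].
case: (excluded_link_or_hull_edge_met S T (k := 3) isT) => [//|[a3 ha3 m3]].
have a012 : (a0 < a1 < a2)%N by clear -ha0 ha1 ha2; lia.
have a238 : (a2 < a3 < 8)%N by clear -ha2 ha3; lia.
have n02 : x a0 != x a2 by apply: x_lt_neq; clear -a012 a238; lia.
have cross : [set x a0; x a2] \in excluded_segments by apply: cross_excluded; clear -ha0 ha2; lia.
case/setUP: m0 => [S0|T0]; case/setUP: m2 => [S2|T2].
- by move: S_out; rewrite (set2_of_card2 (card_val_seg_vertex S) S0 S2 n02) cross.
- by rewrite (noncrossing_D_adj a012 a238 S0 T2 m1 m3) in ST.
- move: m1 m3; rewrite finset.setUC => m1 m3.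
  by rewrite (D_adj_sym (noncrossing_D_adj a012 a238 T0 S2 m1 m3)) in ST.
- by move: T_out; rewrite (set2_of_card2 (card_val_seg_vertex T) T0 T2 n02) cross.
Qed.

Lemma mv_set_excluded_complement :
  mv_set (D_adj p) [set S | val S \notin excluded_segments].
Proof.
apply: mv_set_of_common_neighbours => S T; rewrite !finset.in_set => S_out T_out _ ST.
have [w w_in adj] := excluded_common_neighbour S_out T_out ST.
by exists w; rewrite // finset.in_set negbK.
Qed.

Lemma card_excluded_complement :
  ('C(n, 2) - 8 <= #|[set S : seg_vertex n | val S \notin excluded_segments]|)%N.
Proof.
set A := [set S : seg_vertex n | val S \in excluded_segments].
have A_le8 : (#|A| <= 8)%N.
  rewrite -(card_imset _ val_inj); apply: leq_trans (card_size excluded_segments).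
  apply: subset_leq_card; apply/fintype.subsetP => B /imsetP[S].
  by rewrite finset.in_set => S_in ->.
have -> : [set S : seg_vertex n | val S \notin excluded_segments] = ~: A.
  by apply/finset.setP => S; rewrite !finset.in_set.
by rewrite -card_seg_vertex -(cardsC A) leq_subLR leq_add2r.
Qed.

End EightHullVertices.

Theorem lemma17 (R : realType) (n : nat) (p : 'I_n -> pt R) :
  injective p ->
  general_position p ->
  num_boundary_points p \in [:: 8%N; 9%N] ->
  ('C(n, 2) - 8 <= mu (@D_adj R n p))%N.
Proof.
move=> _ gp m89.
have ext8 : (8 <= #|[set i | extreme p i]|)%N.
  by apply: leq_trans (boundary_points_le_extreme p); move: m89; rewrite !inE => /orP[]/eqP->.
have n_gt1 : (1 < n)%N.
  by rewrite -[n]card_ord; apply: leq_trans (leq_trans ext8 (max_card _)).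
have /card_gt0P[x0] : (0 < #|[set i | extreme p i]|)%N by apply: leq_trans _ ext8.
rewrite inE => ext_x0.
pose x k := iter k (hull_succ p) x0.
have L8 := leq_trans ext8 (card_extreme_le_order gp n_gt1 ext_x0).
have x_neq a b : (a < 8)%N -> (b < 8)%N -> a != b -> x a != x b.
  by move=> a8 b8; apply: iter_neq; exact: leq_trans L8.
have x_edge k : (k < 4)%N -> hull_edge p (x (2 * k)) (x (2 * k).+1).
  by move=> _; exact: hull_edge_iter.
have x_ccw i j k : (i < j < k)%N -> (k < 8)%N -> 0 < orient (p (x i)) (p (x j)) (p (x k)).
  by move=> ijk k8; apply: orient_iter_gt0 ijk (leq_trans k8 L8).
apply: leq_trans (card_excluded_complement x) _.
exact: mv_set_card_le_mu (mv_set_excluded_complement x_neq x_edge x_ccw).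
Qed.
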